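(* Let $\Sigma$ be a non-degenerate (not necessarily complete) fan in $N=\mathbb{Z}^r$ and $Z=Z_\Sigma$ the associated toric variety, and let all notation be as in the context. Then $\beta\colon\mathbf{F}\to F$ is surjective, and there is an exact sequence \[ 0\to \operatorname{Pic}(Z)\to \hat M\xrightarrow{\hat P'}\hat E\to\hat K\to 0, \] where $\operatorname{Pic}(Z)$ is regarded as the subgroup $\ker(\pi)\subseteq K\cong\operatorname{Cl}(Z)$. Moreover, if $\alpha$ is surjective, then $\hat M$ is torsion-free and, under the identifications $\hat M\cong \hat N^*$ and $\hat E\cong\hat F^*$ induced by $\gamma^*$ and $\delta^*$, one has $\hat P'=\hat P^*$.
   Context: Non-degenerate means the primitive ray generators $v_1,\dots,v_n$ of $\Sigma$ generate $\mathbb{Q}^r$ as a convex cone. Let $F=\mathbb{Z}^n$ and $P\colon F\to N$, $e_i\mapsto v_i$. For each maximal cone $\sigma=\operatorname{cone}(v_{i_1},\dots,v_{i_{n_\sigma}})\in\Sigma_{\max}$ let $N_\sigma=\operatorname{lin}_{\mathbb{Q}}(\sigma)\cap N$, $F_\sigma=\mathbb{Z}^{n_\sigma}$, $P_\sigma\colon F_\sigma\to N_\sigma$, $e_j\mapsto v_{i_j}$, $\alpha_\sigma\colon N_\sigma\hookrightarrow N$ the inclusion and $\beta_\sigma\colon F_\sigma\to F$, $e_j\mapsto e_{i_j}$. Let $M=N^*$, $E=F^*$, $M_\sigma=N_\sigma^*$, $E_\sigma=F_\sigma^*$, $K=E/P^*(M)$, $K_\sigma=E_\sigma/P_\sigma^*(M_\sigma)$,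 and $\pi_\sigma\colon K\to K_\sigma$ the map induced by $\beta_\sigma^*$; one has $K\cong\operatorname{Cl}(Z)$, $K_\sigma\cong\operatorname{Cl}(U_\sigma)$ for the affine chart $U_\sigma$, and $\pi_\sigma$ corresponds to restriction of divisor classes. Put $\mathbf{N}=\bigoplus_{\sigma\in\Sigma_{\max}}N_\sigma$, $\mathbf{F}=\bigoplus_\sigma F_\sigma$, $\mathbf{P}=\bigoplus_\sigma P_\sigma\colon\mathbf{F}\to\mathbf{N}$, $\alpha\colon\mathbf{N}\to N$ given by $\alpha_\sigma$ on $N_\sigma$, $\beta\colon\mathbf{F}\to F$ given by $\beta_\sigma$ on $F_\sigma$. Let $\gamma\colon\hat N\to\mathbf{N}$ be a kernel of $\alpha$, $\delta\colon\hat F\to\mathbf{F}$ a kernel of $\beta$, and $\hat P\colon\hat F\to\hat N$ the induced map with $\gamma\circ\hat P=\mathbf{P}\circ\delta$. Let $\mathbf{M}=\mathbf{N}^*$, $\mathbf{E}=\mathbf{F}^*$, $\mathbf{K}=\bigoplus_\sigma K_\sigma$, $\pi\colon K\to\mathbf{K}$, $w\mapsto(\pi_\sigma(w))_\sigma$, $\hat M=\mathbf{M}/\alpha^*(M)$, $\hat E=\mathbf{E}/\beta^*(E)$, $\hat K=\mathbf{K}/\pi(K)$, and $\hat P'\colon\hat M\to\hat E$ the map induced by $\mathbf{P}^*$. *)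

From HB Require Import structures.
From mathcomp Require Import all_boot all_order all_algebra.
Set Implicit Arguments. Unset Strict Implicit. Unset Printing Implicit Defensive.
Import Order.TTheory GRing.Theory Num.Theory.
Local Open Scope ring_scope.

(* Abelian groups presented as "setoid subquotients": a carrier type,  *)
(* a membership predicate, an equality (the quotient relation), an     *)
(* addition and a zero.  All groups of the statement (duals, direct    *)
(* sums, quotients, kernels) are instances.                            *)
Record sgroup := SGroup {
  sg_car : Type;
  sg_in : sg_car -> Prop;
  sg_eq : sg_car -> sg_car -> Prop;
  sg_add : sg_car -> sg_car -> sg_car;
  sg_zero : sg_car }.
Arguments sg_in : clear implicits.
Arguments sg_eq : clear implicits.
Arguments sg_add : clear implicits.
Arguments sg_zero : clear implicits.

Definition sg_hom (A B : sgroup) (f : sg_car A -> sg_car B) : Prop :=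
  [/\ forall x, sg_in A x -> sg_in B (f x),
      forall x y, sg_in A x -> sg_in A y -> sg_eq A x y -> sg_eq B (f x) (f y) &
      forall x y, sg_in A x -> sg_in A y ->
        sg_eq B (f (sg_add A x y)) (sg_add B (f x) (f y))].

Definition sg_injective (A B : sgroup) (f : sg_car A -> sg_car B) : Prop :=
  forall x, sg_in A x -> sg_eq B (f x) (sg_zero B) -> sg_eq A x (sg_zero A).

Definition sg_surjective (A B : sgroup) (f : sg_car A -> sg_car B) : Prop :=
  forall y, sg_in B y -> exists2 x, sg_in A x & sg_eq B (f x) y.

Definition sg_exact (A B C : sgroup) (f : sg_car A -> sg_car B)
    (g : sg_car B -> sg_car C) : Prop :=
  forall y, sg_in B y ->
    (sg_eq C (g y) (sg_zero C) <-> exists2 x, sg_in A x & sg_eq B (f x) y).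

Definition sg_exact4 (A B C D : sgroup) (f : sg_car A -> sg_car B)
    (g : sg_car B -> sg_car C) (h : sg_car C -> sg_car D) : Prop :=
  [/\ sg_hom f, sg_hom g, sg_hom h & 
      [/\ sg_injective f, sg_exact f g, sg_exact g h & sg_surjective h]].

Definition sg_muln (A : sgroup) (x : sg_car A) (k : nat) : sg_car A :=
  iter k (sg_add A x) (sg_zero A).

Definition sg_torsion_free (A : sgroup) : Prop :=
  forall x k, sg_in A x -> (0 < k)%N ->
    sg_eq A (sg_muln x k) (sg_zero A) -> sg_eq A x (sg_zero A).

(* a function on 'rV_k which is additive on the subgroup A: an element *)
(* of Hom(A, Z) (values outside A are irrelevant)                       *)
Definition additive_on (T : Type) (addT : T -> T -> T) (A : T -> Prop)
    (f : T -> int) : Prop :=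
  forall x y, A x -> A y -> f (addT x y) = f x + f y.

Definition full {T : Type} (_ : T) : Prop := True.

Section Fan.
Variables (r n : nat) (v : 'I_n -> 'rV[int]_r).

Definition vQ (i : 'I_n) : 'rV[rat]_r := map_mx intr (v i).

Definition dotQ (u x : 'rV[rat]_r) : rat := \sum_j u 0 j * x 0 j.

Definition cone (S : {set 'I_n}) (x : 'rV[rat]_r) : Prop :=
  exists lam : 'I_n -> rat,
    [/\ forall i, 0 <= lam i, forall i, i \notin S -> lam i = 0 &
        x = \sum_i lam i *: vQ i].

Definition linQ (S : {set 'I_n}) (x : 'rV[rat]_r) : Prop :=
  exists lam : 'I_n -> rat,
    (forall i, i \notin S -> lam i = 0) /\ x = \sum_i lam i *: vQ i.

Definition strongly_convex (S : {set 'I_n}) : Prop :=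
  forall x, cone S x -> cone S (- x) -> x = 0.

Definition primitive (w : 'rV[int]_r) : Prop :=
  w != 0 /\ forall (k : int) (w' : 'rV[int]_r), w = k *: w' -> k = 1 \/ k = -1.

(* Sigma is a fan whose cones are cone(v_i : i in S), S in Sigma, and *)
(* whose rays have primitive generators exactly v_1, ..., v_n.         *)
Definition is_fan (Sigma : {set {set 'I_n}}) : Prop :=
  [/\
      forall S, S \in Sigma -> strongly_convex S,
      forall S u, S \in Sigma -> (forall x, cone S x -> 0 <= dotQ u x) ->
        exists2 T, T \in Sigma & forall x, cone T x <-> (cone S x /\ dotQ u x = 0),
      forall S T, S \in Sigma -> T \in Sigma ->
        (exists u, (forall x, cone S x -> 0 <= dotQ u x) /\
           forall x, (cone S x /\ cone T x) <-> (cone S x /\ dotQ u x = 0)) /\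
        (exists u, (forall x, cone T x -> 0 <= dotQ u x) /\
           forall x, (cone S x /\ cone T x) <-> (cone T x /\ dotQ u x = 0)),
      (* S lists exactly the rays contained in the cone *)
      forall S i, S \in Sigma -> cone S (vQ i) -> i \in S &
     [/\
      forall i, [set i] \in Sigma,
      forall i, primitive (v i) &
      injective v]].

Definition fan_nondegenerate : Prop := forall x : 'rV[rat]_r, cone setT x.

Variable Sigma : {set {set 'I_n}}.

(* maximal cones (for cones given by their rays, inclusion of cones is *)
(* inclusion of the ray sets)                                           *)
Definition Sigma_max : {set {set 'I_n}} :=
  [set S in Sigma | [forall T in Sigma, (S \subset T) ==> (S == T)]].

(* N = Z^r, F = Z^n, P : F -> N, e_i |-> v_i *)
Definition Pmap (y : 'rV[int]_n) : 'rV[int]_r := \sum_i y 0 i *: v i.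

Definition Nsig (S : {set 'I_n}) (x : 'rV[int]_r) : Prop := linQ S (map_mx intr x).

(* F_sigma = Z^{rays of sigma}, viewed inside F = Z^n via beta_sigma *)
Definition Fsig (S : {set 'I_n}) (y : 'rV[int]_n) : Prop :=
  forall i, i \notin S -> y 0 i = 0.

Definition addr_rV (k : nat) (x y : 'rV[int]_k) := x + y.

(* M = N^*, E = F^* *)
Definition formN := additive_on (@addr_rV r) full.
Definition formF := additive_on (@addr_rV n) full.

(* K = E / P^*(M) *)
Definition Kgrp : sgroup :=
  @SGroup ('rV[int]_n -> int) formF
    (fun e1 e2 => exists2 m, formN m & forall y, e1 y - e2 y = m (Pmap y))
    (fun e1 e2 y => e1 y + e2 y) (fun _ => 0).

(* bold K = (+)_sigma K_sigma, K_sigma = E_sigma / P_sigma^*(M_sigma) *)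
Definition bKgrp : sgroup :=
  @SGroup ({set 'I_n} -> 'rV[int]_n -> int)
    (fun e => forall S, S \in Sigma_max -> additive_on (@addr_rV n) (Fsig S) (e S))
    (fun e1 e2 => forall S, S \in Sigma_max ->
       exists2 m, additive_on (@addr_rV r) (Nsig S) m &
         forall y, Fsig S y -> e1 S y - e2 S y = m (Pmap y))
    (fun e1 e2 S y => e1 S y + e2 S y) (fun _ _ => 0).

(* pi : K -> bold K, restriction along the beta_sigma *)
Definition pi_map (e : 'rV[int]_n -> int) : {set 'I_n} -> 'rV[int]_n -> int :=
  fun _ => e.

Definition Picgrp : sgroup :=
  @SGroup ('rV[int]_n -> int)
    (fun e => sg_in Kgrp e /\ sg_eq bKgrp (pi_map e) (sg_zero bKgrp))
    (sg_eq Kgrp) (sg_add Kgrp) (sg_zero Kgrp).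

(* hat M = bold M / alpha^*(M) *)
Definition Mhat : sgroup :=
  @SGroup ({set 'I_n} -> 'rV[int]_r -> int)
    (fun x => forall S, S \in Sigma_max -> additive_on (@addr_rV r) (Nsig S) (x S))
    (fun x1 x2 => exists2 m, formN m &
       forall S, S \in Sigma_max -> forall u, Nsig S u -> x1 S u - x2 S u = m u)
    (fun x1 x2 S u => x1 S u + x2 S u) (fun _ _ => 0).

(* hat E = bold E / beta^*(E) *)
Definition Ehat : sgroup :=
  @SGroup ({set 'I_n} -> 'rV[int]_n -> int)
    (fun e => forall S, S \in Sigma_max -> additive_on (@addr_rV n) (Fsig S) (e S))
    (fun e1 e2 => exists2 e, formF e &
       forall S, S \in Sigma_max -> forall y, Fsig S y -> e1 S y - e2 S y = e y)
    (fun e1 e2 S y => e1 S y + e2 S y) (fun _ _ => 0).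

(* hat K = bold K / pi(K) *)
Definition Khat : sgroup :=
  @SGroup ({set 'I_n} -> 'rV[int]_n -> int)
    (fun e => forall S, S \in Sigma_max -> additive_on (@addr_rV n) (Fsig S) (e S))
    (fun e1 e2 => exists2 e, formF e &
       forall S, S \in Sigma_max ->
         exists2 m, additive_on (@addr_rV r) (Nsig S) m &
           forall y, Fsig S y -> e1 S y - e2 S y - e y = m (Pmap y))
    (fun e1 e2 S y => e1 S y + e2 S y) (fun _ _ => 0).

Definition Phat' (x : {set 'I_n} -> 'rV[int]_r -> int) :
    {set 'I_n} -> 'rV[int]_n -> int :=
  fun S y => x S (Pmap y).

Definition bN (x : {set 'I_n} -> 'rV[int]_r) : Prop :=
  forall S, (S \in Sigma_max -> Nsig S (x S)) /\ (S \notin Sigma_max -> x S = 0).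
Definition bF (y : {set 'I_n} -> 'rV[int]_n) : Prop :=
  forall S, (S \in Sigma_max -> Fsig S (y S)) /\ (S \notin Sigma_max -> y S = 0).
Definition alpha (x : {set 'I_n} -> 'rV[int]_r) : 'rV[int]_r :=
  \sum_(S in Sigma_max) x S.
Definition beta (y : {set 'I_n} -> 'rV[int]_n) : 'rV[int]_n :=
  \sum_(S in Sigma_max) y S.

Definition alpha_surjective : Prop :=
  forall z : 'rV[int]_r, exists2 x, bN x & alpha x = z.
Definition beta_surjective : Prop :=
  forall z : 'rV[int]_n, exists2 y, bF y & beta y = z.

(* hat N = ker alpha, hat F = ker beta (gamma, delta the inclusions) *)
Definition Nhat (x : {set 'I_n} -> 'rV[int]_r) : Prop := bN x /\ alpha x = 0.
Definition Fhat (y : {set 'I_n} -> 'rV[int]_n) : Prop := bF y /\ beta y = 0.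

Definition addfam (k : nat) (x y : {set 'I_n} -> 'rV[int]_k) :=
  fun S => x S + y S.

Definition NhatDual : sgroup :=
  @SGroup (({set 'I_n} -> 'rV[int]_r) -> int)
    (additive_on (@addfam r) Nhat)
    (fun f g => forall x, Nhat x -> f x = g x)
    (fun f g x => f x + g x) (fun _ => 0).
Definition FhatDual : sgroup :=
  @SGroup (({set 'I_n} -> 'rV[int]_n) -> int)
    (additive_on (@addfam n) Fhat)
    (fun f g => forall y, Fhat y -> f y = g y)
    (fun f g y => f y + g y) (fun _ => 0).

Definition gammaStar (x : {set 'I_n} -> 'rV[int]_r -> int) :
    ({set 'I_n} -> 'rV[int]_r) -> int :=
  fun y => \sum_(S in Sigma_max) x S (y S).
Definition deltaStar (e : {set 'I_n} -> 'rV[int]_n -> int) :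
    ({set 'I_n} -> 'rV[int]_n) -> int :=
  fun y => \sum_(S in Sigma_max) e S (y S).

Definition Phat (y : {set 'I_n} -> 'rV[int]_n) : {set 'I_n} -> 'rV[int]_r :=
  fun S => Pmap (y S).
Definition PhatStar (f : ({set 'I_n} -> 'rV[int]_r) -> int) :
    ({set 'I_n} -> 'rV[int]_n) -> int :=
  fun y => f (Phat y).

End Fan.

(* For sublattices L_S of Z^k whose sum map (+)_S L_S -> Z^k is onto, the sum
   map has an additive section because Z^k is free.  The section shows that the
   pairing identifies ((+)_S L_S^* ) / (Z^k)^* with the dual of the kernel of the
   sum map, and that this quotient is torsion-free.  Taking L_S = N_S (when alpha
   is onto) and L_S = F_S (beta is always onto, as every ray lies in a maximal
   cone) gives hat M = hat N^* and hat E = hat F^*.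
   A class p of Pic(Z) = ker pi is a form on F whose restriction to each F_S
   factors as m_S o P; the factor m_S is unique on N_S because every element of
   N_S has a nonzero multiple in P(F_S).  The family (m_S) defines Pic(Z) -> hat M;
   it is injective because every e_i lies in some F_S, and exactness at hat M
   and hat E amounts to unwinding the three quotients. *)

From HB Require Import structures.
From mathcomp Require Import all_boot all_order all_algebra ring.
From Stdlib Require Import ClassicalEpsilon FunctionalExtensionality.
Import Order.TTheory GRing.Theory Num.Theory.
Set Implicit Arguments. Unset Strict Implicit. Unset Printing Implicit Defensive.
Local Open Scope ring_scope.

Section AdditiveOnBig.
Variables (T : Type) (addT : T -> T -> T) (zeroT : T) (A : T -> Prop) (h : T -> int).
Hypotheses (A0 : A zeroT) (AD : forall a b, A a -> A b -> A (addT a b)).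
Hypotheses (h0 : h zeroT = 0) (hD : additive_on addT A h).

Lemma additive_on_big (I : Type) (s : seq I) (P : pred I) (F : I -> T) :
  (forall i, P i -> A (F i)) ->
  h (\big[addT/zeroT]_(i <- s | P i) F i) = \sum_(i <- s | P i) h (F i).
Proof.
move=> AF; elim: s => [|i s IHs]; first by rewrite !big_nil.
rewrite !big_cons; case: ifP => // Pi.
by rewrite hD ?IHs //; [exact: AF | exact: big_ind].
Qed.
End AdditiveOnBig.

Section RowSubgroup.
Variables (k : nat) (L : 'rV[int]_k -> Prop).
Hypotheses (L0 : L 0) (LD : forall a b, L a -> L b -> L (a + b))
  (LN : forall a, L a -> L (- a)).

Lemma row_subgroup_sum (I : Type) (s : seq I) (P : pred I) (F : I -> 'rV[int]_k) :
  (forall i, P i -> L (F i)) -> L (\sum_(i <- s | P i) F i).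
Proof. exact: big_ind. Qed.

Lemma row_subgroupMn a m : L a -> L (a *+ m).
Proof. by move=> La; rewrite -[m]card_ord -sumr_const; apply: row_subgroup_sum. Qed.

Lemma row_subgroupZ (c : int) a : L a -> L (c *: a).
Proof.
move=> La; rewrite -[c]intz scaler_int.
by case: c => m; [exact: row_subgroupMn | apply/LN/row_subgroupMn].
Qed.

Variable h : 'rV[int]_k -> int.
Hypothesis hD : additive_on (@addr_rV k) L h.

Lemma additive_on0 : h 0 = 0.
Proof. by apply: (@addrI _ (h 0)); rewrite addr0 -hD // /addr_rV addr0. Qed.

Lemma additive_onN a : L a -> h (- a) = - h a.
Proof.
move=> La; apply: (@addrI _ (h a)).
rewrite -hD //; last exact: LN.
by rewrite /addr_rV !subrr additive_on0.
Qed.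

Lemma additive_onB a b : L a -> L b -> h (a - b) = h a - h b.
Proof. by move=> La Lb; rewrite hD ?additive_onN //; apply: LN. Qed.

Lemma additive_on_sum (I : Type) (s : seq I) (P : pred I) (F : I -> 'rV[int]_k) :
  (forall i, P i -> L (F i)) -> h (\sum_(i <- s | P i) F i) = \sum_(i <- s | P i) h (F i).
Proof. exact: (additive_on_big L0 LD additive_on0 hD). Qed.

Lemma additive_onZ (c : int) a : L a -> h (c *: a) = c * h a.
Proof.
move=> La; have hMn m : h (a *+ m) = h a *+ m.
  by rewrite -[m]card_ord -!sumr_const additive_on_sum.
rewrite -[c in LHS]intz scaler_int mulrC -mulrzz.
by case: c => m /=; rewrite ?additive_onN ?hMn //; apply: row_subgroupMn.
Qed.
End RowSubgroup.

Lemma additive_on_full_delta k (g : 'rV[int]_k -> int) y :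
  additive_on (@addr_rV k) full g -> g y = \sum_i y 0 i * g (delta_mx 0 i).
Proof.
move=> gD; rewrite {1}(row_sum_delta y) (additive_on_sum (L := full)) //.
by apply: eq_bigr => i _; rewrite (additive_onZ (L := full)).
Qed.

Lemma eq_additive_on_full k (g g' : 'rV[int]_k -> int) :
  additive_on (@addr_rV k) full g -> additive_on (@addr_rV k) full g' ->
  (forall i, g (delta_mx 0 i) = g' (delta_mx 0 i)) -> g =1 g'.
Proof.
move=> gD g'D eq_g y; rewrite (additive_on_full_delta y gD) (additive_on_full_delta y g'D).
by apply: eq_bigr => i _; rewrite eq_g.
Qed.

Section DirectSumDuality.
Variables (n k : nat) (Smax : {set {set 'I_n}}) (L : {set 'I_n} -> 'rV[int]_k -> Prop).
Hypotheses (L0 : forall S, L S 0) (LD : forall S a b, L S a -> L S b -> L S (a + b))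
  (LN : forall S a, L S a -> L S (- a)).

Definition in_dsum (y : {set 'I_n} -> 'rV[int]_k) : Prop :=
  forall S, (S \in Smax -> L S (y S)) /\ (S \notin Smax -> y S = 0).

Definition ker_dsum (y : {set 'I_n} -> 'rV[int]_k) : Prop :=
  in_dsum y /\ \sum_(S in Smax) y S = 0.

Definition hat_grp : sgroup :=
  @SGroup ({set 'I_n} -> 'rV[int]_k -> int)
    (fun x => forall S, S \in Smax -> additive_on (@addr_rV k) (L S) (x S))
    (fun x1 x2 => exists2 m, additive_on (@addr_rV k) full m &
       forall S, S \in Smax -> forall u, L S u -> x1 S u - x2 S u = m u)
    (fun x1 x2 S u => x1 S u + x2 S u) (fun _ _ => 0).

Definition ker_dsum_dual : sgroup :=
  @SGroup (({set 'I_n} -> 'rV[int]_k) -> int)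
    (additive_on (@addfam n k) ker_dsum)
    (fun f g => forall y, ker_dsum y -> f y = g y)
    (fun f g y => f y + g y) (fun _ => 0).

Definition dsum_pairing (x : {set 'I_n} -> 'rV[int]_k -> int)
    (y : {set 'I_n} -> 'rV[int]_k) : int :=
  \sum_(S in Smax) x S (y S).

Definition dsum_single (S : {set 'I_n}) (u : 'rV[int]_k) : {set 'I_n} -> 'rV[int]_k :=
  fun T => if T == S then u else 0.

Lemma in_dsum_single S u : S \in Smax -> L S u -> in_dsum (dsum_single S u).
Proof. by move=> SS Lu T; rewrite /dsum_single; case: eqP => [->|]; split => // /negP. Qed.

Lemma sum_dsum_single S u : S \in Smax -> \sum_(T in Smax) dsum_single S u T = u.
Proof.
move=> SS; rewrite (bigD1 S) //= /dsum_single eqxx big1 ?addr0 //.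
by move=> T /andP[_ /negbTE ->].
Qed.

Section Pairing.
Variable x : {set 'I_n} -> 'rV[int]_k -> int.
Hypothesis xH : forall S, S \in Smax -> additive_on (@addr_rV k) (L S) (x S).

Lemma dsum_pairingD y y' : in_dsum y -> in_dsum y' ->
  dsum_pairing x (fun S => y S + y' S) = dsum_pairing x y + dsum_pairing x y'.
Proof.
move=> yS y'S; rewrite -big_split; apply: eq_bigr => S SS.
by apply: xH => //; [exact: (yS S).1 | exact: (y'S S).1].
Qed.

Lemma dsum_pairingB y y' : in_dsum y -> in_dsum y' ->
  dsum_pairing x (fun S => y S - y' S) = dsum_pairing x y - dsum_pairing x y'.
Proof.
move=> yS y'S; rewrite -sumrB; apply: eq_bigr => S SS.
by apply: (additive_onB (L0 S) (@LN S) (xH SS)); [exact: (yS S).1 | exact: (y'S S).1].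
Qed.

Lemma dsum_pairing_single S u : S \in Smax -> L S u -> dsum_pairing x (dsum_single S u) = x S u.
Proof.
move=> SS Lu; rewrite /dsum_pairing (bigD1 S) //= /dsum_single eqxx big1 ?addr0 //.
by move=> T /andP[TS /negbTE ->]; apply: (additive_on0 (L0 T) (xH TS)).
Qed.
End Pairing.

Lemma dsum_pairing_hom : sg_hom (A := hat_grp) (B := ker_dsum_dual) dsum_pairing.
Proof.
split.
- by move=> x xH y y' [yS _] [y'S _]; apply: dsum_pairingD.
- move=> x1 x2 _ _ [m mD eq_m] y [yS sum_y]; apply/eqP; rewrite -subr_eq0; apply/eqP.
  rewrite -sumrB (eq_bigr (fun S => m (y S))) => [|S SS]; last first.
    by apply: eq_m => //; exact: (yS S).1.
  by rewrite -(additive_on_sum (L := full)) // sum_y (additive_on0 (L := full)).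
- by move=> x1 x2 _ _ y _; rewrite /dsum_pairing /= big_split.
Qed.

Definition dsum_section (sect : 'rV[int]_k -> {set 'I_n} -> 'rV[int]_k) : Prop :=
  [/\ forall z, in_dsum (sect z), forall z, \sum_(S in Smax) sect z S = z &
      forall a b S, sect (a + b) S = sect a S + sect b S].

Lemma dsum_section_exists :
  (forall z, exists2 y, in_dsum y & \sum_(S in Smax) y S = z) ->
  exists sect, dsum_section sect.
Proof.
move=> surj; have [pre pre_in pre_sum] := fin_all_exists2 (fun j : 'I_k => surj (delta_mx 0 j)).
exists (fun z S => \sum_j z 0 j *: pre j S); split.
- move=> z S; split => [SS | SnS].
    apply: (row_subgroup_sum (L0 S) (@LD S)) => j _.
    by apply: (row_subgroupZ (L0 S) (@LD S) (@LN S)); exact: (pre_in j S).1.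
  by rewrite big1 // => j _; rewrite (pre_in j S).2 // scaler0.
- move=> z; rewrite exchange_big [RHS]row_sum_delta; apply: eq_bigr => j _.
  by rewrite -scaler_sumr pre_sum.
- by move=> a b S; rewrite -big_split; apply: eq_bigr => j _; rewrite mxE scalerDl.
Qed.

Lemma ker_dsum0 : ker_dsum (fun _ => 0).
Proof. by split => [S|]; [split | rewrite big1]. Qed.

Lemma ker_dsumD y y' : ker_dsum y -> ker_dsum y' -> ker_dsum (addfam y y').
Proof.
move=> [yS sum_y] [y'S sum_y']; split; last by rewrite big_split /= sum_y sum_y' addr0.
move=> S; have [in1 out1] := yS S; have [in2 out2] := y'S S; split => [SS | SnS].
  by apply: LD; [exact: in1 | exact: in2].
by rewrite /addfam out1 // out2 // addr0.
Qed.

Lemma sum_dsum_singles y T : in_dsum y -> \sum_(S in Smax) dsum_single S (y S) T = y T.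
Proof.
move=> yS; rewrite /dsum_single; have [TS | TnS] := boolP (T \in Smax).
  rewrite (bigD1 T) //= eqxx big1 ?addr0 // => S /andP[_ /negbTE].
  by rewrite eq_sym => ->.
rewrite (yS T).2 // big1 // => S SS; case: eqP => // TS.
by move: TnS; rewrite TS SS.
Qed.

Lemma hat_grp_muln (x : sg_car hat_grp) m S u : sg_muln x m S u = x S u *+ m.
Proof. by elim: m => [|m IHm] /=; rewrite ?mulr0n // IHm mulrS. Qed.

Section AdditiveSection.
Variable sect : 'rV[int]_k -> {set 'I_n} -> 'rV[int]_k.
Hypothesis sectP : dsum_section sect.

Lemma dsum_section0 S : sect 0 S = 0.
Proof.
have [_ _ sectD] := sectP.
by apply: (@addrI _ (sect 0 S)); rewrite -sectD !addr0.
Qed.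

Lemma dsum_section_sum (I : Type) (s : seq I) (P : pred I) (F : I -> 'rV[int]_k) S :
  sect (\sum_(i <- s | P i) F i) S = \sum_(i <- s | P i) sect (F i) S.
Proof.
have [_ _ sectD] := sectP.
exact: (big_morph (sect^~ S) (fun a b => sectD a b S) (dsum_section0 S)).
Qed.

Lemma ker_dsum_single_section S u : S \in Smax -> L S u ->
  ker_dsum (fun T => dsum_single S u T - sect u T).
Proof.
have [sect_in sect_sum _] := sectP; move=> SS Lu; split.
- move=> T; have [in1 out1] := in_dsum_single SS Lu T; have [in2 out2] := sect_in u T.
  split => [TS | TnS]; first by apply: LD; [exact: in1 | apply/LN/in2].
  by rewrite out1 // out2 // subr0.
- by rewrite sumrB sum_dsum_single // sect_sum subrr.
Qed.

Lemma dsum_pairing_section_additive x :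
  (forall S, S \in Smax -> additive_on (@addr_rV k) (L S) (x S)) ->
  additive_on (@addr_rV k) full (fun z => dsum_pairing x (sect z)).
Proof.
have [sect_in _ sectD] := sectP.
move=> xH a b _ _; rewrite -dsum_pairingD //.
by apply: eq_bigr => S _; rewrite sectD.
Qed.
End AdditiveSection.

Section Onto.
Hypothesis dsum_onto : forall z, exists2 y, in_dsum y & \sum_(S in Smax) y S = z.

Lemma dsum_pairing_injective : sg_injective (A := hat_grp) (B := ker_dsum_dual) dsum_pairing.
Proof.
have [sect sectP] := dsum_section_exists dsum_onto; have [sect_in _ _] := sectP.
move=> x xH pair0; exists (fun z => dsum_pairing x (sect z)).
  exact: (dsum_pairing_section_additive sectP xH).
move=> S SS u Lu; apply/eqP; rewrite subr0 -(dsum_pairing_single xH SS Lu) -subr_eq0.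
rewrite -dsum_pairingB //; last exact: in_dsum_single.
by apply/eqP/pair0/(ker_dsum_single_section sectP).
Qed.

Lemma dsum_pairing_surjective : sg_surjective (A := hat_grp) (B := ker_dsum_dual) dsum_pairing.
Proof.
have [sect sectP] := dsum_section_exists dsum_onto; have [_ _ sectD] := sectP.
move=> f fD; pose proj S u T := dsum_single S u T - sect u T.
have f0 : f (fun _ => 0) = 0.
  apply: (@addrI _ (f (fun _ => 0))); rewrite addr0 -fD; [|exact: ker_dsum0..].
  by congr f; apply: functional_extensionality => S; rewrite /addfam addr0.
exists (fun S u => f (proj S u)).
  move=> S SS a b La Lb.
  have proj_ker u : L S u -> ker_dsum (proj S u) := ker_dsum_single_section sectP SS.
  rewrite -fD; [|exact: proj_ker..].
  congr f; apply: functional_extensionality => T; rewrite /addfam /proj /dsum_single /addr_rV.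
  by case: (T == S); rewrite sectD opprD ?add0r // addrACA.
move=> y [yS sum_y]; rewrite /dsum_pairing /=.
rewrite -(additive_on_big ker_dsum0 ker_dsumD f0 fD) => [|S SS]; last first.
  exact: (ker_dsum_single_section sectP SS ((yS S).1 SS)).
congr f; apply: functional_extensionality => T.
rewrite (big_morph (fun F => F T) (id1 := 0) (op1 := +%R) (fun _ _ => erefl) erefl).
by rewrite sumrB -(dsum_section_sum sectP) sum_y (dsum_section0 sectP) subr0 sum_dsum_singles.
Qed.

Lemma hat_grp_torsion_free : sg_torsion_free hat_grp.
Proof.
have [sect sectP] := dsum_section_exists dsum_onto; have [sect_in sect_sum _] := sectP.
move=> x m xH m_gt0 [g gD eq_g]; exists (fun z => dsum_pairing x (sect z)).
  exact: (dsum_pairing_section_additive sectP xH).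
have gE z : g z = dsum_pairing x (sect z) *+ m.
  rewrite -{1}(sect_sum z) (additive_on_sum (L := full)) // -sumrMnl.
  apply: eq_bigr => S SS; rewrite -(eq_g S SS) /= ?subr0 ?hat_grp_muln //.
  exact: (sect_in z S).1.
move=> S SS u Lu; apply/eqP; rewrite subr0 -(eqr_pMn2r m_gt0) -gE.
by rewrite -(eq_g S SS u Lu) /= subr0 hat_grp_muln.
Qed.
End Onto.
End DirectSumDuality.

Section Lattices.
Variables (r n : nat) (v : 'I_n -> 'rV[int]_r).

Lemma PmapD a b : Pmap v (a + b) = Pmap v a + Pmap v b.
Proof. by rewrite /Pmap -big_split; apply: eq_bigr => i _; rewrite mxE scalerDl. Qed.

Lemma additive_on_full_Pmap m : additive_on (@addr_rV r) full m ->
  additive_on (@addr_rV n) full (fun y => m (Pmap v y)).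
Proof. by move=> mD a b _ _; rewrite /addr_rV PmapD; apply: mD. Qed.

Lemma map_Pmap y : map_mx intr (Pmap v y) = \sum_i (y 0 i)%:~R *: vQ v i.
Proof. by rewrite raddf_sum; apply: eq_bigr => i _; rewrite /= map_mxZ. Qed.

Lemma Fsig0 S : Fsig S (0 : 'rV[int]_n).
Proof. by move=> i _; rewrite mxE. Qed.

Lemma FsigD S (a b : 'rV[int]_n) : Fsig S a -> Fsig S b -> Fsig S (a + b).
Proof. by move=> Fa Fb i iS; rewrite mxE Fa ?Fb ?addr0. Qed.

Lemma FsigN S (a : 'rV[int]_n) : Fsig S a -> Fsig S (- a).
Proof. by move=> Fa i iS; rewrite mxE Fa ?oppr0. Qed.

Lemma Fsig_delta (S : {set 'I_n}) i : i \in S -> Fsig S (delta_mx 0 i : 'rV[int]_n).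
Proof. by move=> iS j jS; rewrite mxE eqxx; case: eqP => // ji; move: jS; rewrite ji iS. Qed.

Lemma Nsig0 S : Nsig v S 0.
Proof. by exists (fun _ => 0); split => //; rewrite map_mx0 big1 // => i _; rewrite scale0r. Qed.

Lemma NsigD S a b : Nsig v S a -> Nsig v S b -> Nsig v S (a + b).
Proof.
move=> [l [l0 Ea]] [l' [l'0 Eb]]; exists (fun i => l i + l' i); split.
  by move=> i iS; rewrite l0 // l'0 // addr0.
by rewrite map_mxD Ea Eb -big_split; apply: eq_bigr => i _; rewrite scalerDl.
Qed.

Lemma NsigN S a : Nsig v S a -> Nsig v S (- a).
Proof.
move=> [l [l0 Ea]]; exists (fun i => - l i); split; first by move=> i iS; rewrite l0 ?oppr0.
by rewrite map_mxN Ea -sumrN; apply: eq_bigr => i _; rewrite scaleNr.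
Qed.

Lemma Nsig_Pmap S y : Fsig S y -> Nsig v S (Pmap v y).
Proof. by move=> Fy; exists (fun i => (y 0 i)%:~R); split; [move=> i /Fy -> | exact: map_Pmap]. Qed.

Lemma Nsig_multiple_Pmap S u : Nsig v S u ->
  exists2 D : int, D != 0 & exists2 y, Fsig S y & Pmap v y = D *: u.
Proof.
move=> [l [l0 Eu]]; pose D : int := \prod_i denq (l i).
pose y : 'rV[int]_n := \row_i ((\prod_(j | j != i) denq (l j)) * numq (l i)).
have yE i : (y 0 i)%:~R = D%:~R * l i :> rat.
  by rewrite mxE /D [in RHS](bigD1 i) //= !intrM numqE; ring.
exists D; first by rewrite gt_eqF // prodr_gt0 // => i _; apply: denq_gt0.
exists y; first by move=> i iS; rewrite mxE l0 // mulr0.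
have /rowP map_eq : map_mx intr (Pmap v y) = map_mx intr (D *: u) :> 'rV[rat]_r.
  rewrite map_Pmap map_mxZ Eu scaler_sumr; apply: eq_bigr => i _.
  by rewrite yE scalerA.
by apply/rowP => j; have := map_eq j; rewrite !mxE => /intr_inj.
Qed.

Lemma additive_on_Nsig_eq0 S h : additive_on (@addr_rV r) (Nsig v S) h ->
  (forall y, Fsig S y -> h (Pmap v y) = 0) -> forall u, Nsig v S u -> h u = 0.
Proof.
move=> hD hP0 u Nu; have [D D0 [y Fy Py]] := Nsig_multiple_Pmap Nu.
have := hP0 y Fy; rewrite Py (additive_onZ (@Nsig0 S) (@NsigD S) (@NsigN S) hD) //.
by move/eqP; rewrite mulf_eq0 (negbTE D0) => /eqP.
Qed.
End Lattices.

Section Fans.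
Variables (n : nat) (Sigma : {set {set 'I_n}}).
Hypothesis rays_in_Sigma : forall i, [set i] \in Sigma.

Lemma ray_in_max_cone i : exists2 S, S \in Sigma_max Sigma & i \in S.
Proof.
have [S /maxsetP[SSigma S_max] iS] := maxset_exists (P := [pred T in Sigma]) (rays_in_Sigma i).
exists S; last by rewrite -sub1set.
rewrite inE (SSigma : S \in Sigma); apply/forall_inP => T TSigma; apply/implyP => ST.
by rewrite eq_sym (S_max T).
Qed.

Lemma beta_surjective_of_rays : beta_surjective Sigma.
Proof.
have [c c_max ic] := fin_all_exists2 ray_in_max_cone.
move=> z; exists (fun S => \row_j (if S == c j then z 0 j else 0)).
  move=> S; split => [SS i iS | SnS]; rewrite ?mxE.
    by case: eqP => // Sc; move: iS; rewrite Sc ic.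
  by apply/rowP => j; rewrite !mxE; case: eqP => // Sc; move: SnS; rewrite Sc c_max.
apply/rowP => j; rewrite /beta summxE (bigD1 (c j)) //= mxE eqxx big1 ?addr0 //.
by move=> S /andP[_ /negbTE]; rewrite mxE => ->.
Qed.
End Fans.

Section Descent.
Variables (r n : nat) (v : 'I_n -> 'rV[int]_r) (Sigma : {set {set 'I_n}}).

Definition descends (p : 'rV[int]_n -> int) (S : {set 'I_n}) (m : 'rV[int]_r -> int) : Prop :=
  additive_on (@addr_rV r) (Nsig v S) m /\ forall y, Fsig S y -> p y = m (Pmap v y).

Lemma descends_unique p p' S m m' : descends p S m -> descends p' S m' ->
  (forall y, Fsig S y -> p y = p' y) -> forall u, Nsig v S u -> m u = m' u.
Proof.
move=> [mD pm] [m'D p'm'] pp' u Nu; apply/eqP; rewrite -subr_eq0; apply/eqP.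
apply: (additive_on_Nsig_eq0 (h := fun u => m u - m' u)) Nu => [a b Na Nb | y Fy] /=.
  by rewrite mD // m'D //; ring.
by rewrite -pm -?p'm' ?pp' ?subrr.
Qed.

Lemma descendsD p p' S m m' : descends p S m -> descends p' S m' ->
  descends (fun y => p y + p' y) S (fun u => m u + m' u).
Proof.
move=> [mD pm] [m'D p'm']; split => [a b Na Nb | y Fy]; last by rewrite pm ?p'm'.
by rewrite /= mD // m'D //; ring.
Qed.

Lemma descendsB p p' S m m' : descends p S m -> descends p' S m' ->
  descends (fun y => p y - p' y) S (fun u => m u - m' u).
Proof.
move=> [mD pm] [m'D p'm']; split => [a b Na Nb | y Fy]; last by rewrite pm ?p'm'.
by rewrite /= mD // m'D //; ring.
Qed.

Lemma descends_Pmap m S : additive_on (@addr_rV r) full m -> descends (fun y => m (Pmap v y)) S m.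
Proof. by move=> mD; split => // a b _ _; apply: mD. Qed.

Definition descent (p : 'rV[int]_n -> int) (S : {set 'I_n}) : 'rV[int]_r -> int :=
  epsilon (inhabits (fun _ => 0)) (descends p S).

Lemma descentP p S : sg_in (Picgrp v Sigma) p -> S \in Sigma_max Sigma ->
  descends p S (descent p S).
Proof.
move=> [_ p_triv] SS; apply: epsilon_spec; have [m mD pm] := p_triv S SS.
by exists m; split => // y Fy; rewrite -pm // /pi_map subr0.
Qed.

Lemma in_Picgrp p : formF p ->
  (forall S, S \in Sigma_max Sigma -> exists m, descends p S m) -> sg_in (Picgrp v Sigma) p.
Proof.
move=> pD p_desc; split => // S SS; have [m [mD pm]] := p_desc S SS.
by exists m => // y Fy; rewrite /pi_map /= subr0 pm.
Qed.

Lemma descent_hom : sg_hom (A := Picgrp v Sigma) (B := Mhat v Sigma) descent.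
Proof.
split.
- by move=> p pPic S SS; have [] := descentP pPic SS.
- move=> p1 p2 p1Pic p2Pic [m mN p12]; exists m => // S SS u Nu.
  have := descends_unique (descendsB (descentP p1Pic SS) (descends_Pmap S mN))
    (descentP p2Pic SS) _ Nu.
  by move=> <- => [|y _]; rewrite ?subKr // -p12 subKr.
- move=> p1 p2 p1Pic p2Pic; exists (fun _ => 0) => [a b _ _ | S SS u Nu]; first by rewrite addr0.
  have p12Pic : sg_in (Picgrp v Sigma) (sg_add (Picgrp v Sigma) p1 p2).
    apply: in_Picgrp => [a b _ _ | T TS].
      by rewrite /= (p1Pic.1 a b I I) (p2Pic.1 a b I I); ring.
    by eexists; apply: descendsD; apply: descentP.
  by rewrite (descends_unique (descentP p12Pic SS) (descendsD (descentP p1Pic SS)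
    (descentP p2Pic SS)) _ Nu) //= subrr.
Qed.

Lemma descent_injective : (forall i, [set i] \in Sigma) ->
  sg_injective (A := Picgrp v Sigma) (B := Mhat v Sigma) descent.
Proof.
move=> rays p pPic [m mN desc_m]; exists m => // y; rewrite subr0.
apply: (eq_additive_on_full pPic.1 (additive_on_full_Pmap v mN)) => i.
have [S SS iS] := ray_in_max_cone rays i; have [_ pP] := descentP pPic SS.
have Fi := Fsig_delta iS.
by rewrite (pP _ Fi) -(desc_m S SS _ (Nsig_Pmap v Fi)) /= subr0.
Qed.

Lemma Phat'_hom : sg_hom (A := Mhat v Sigma) (B := Ehat Sigma) (Phat' v).
Proof.
split.
- move=> x xM S SS a b Fa Fb; rewrite /Phat' /addr_rV PmapD.
  by apply: xM => //; apply: Nsig_Pmap.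
- move=> x1 x2 _ _ [m mN x12]; exists (fun y => m (Pmap v y)); first exact: additive_on_full_Pmap.
  by move=> S SS y Fy; apply: x12 => //; apply: Nsig_Pmap.
- by move=> x1 x2 _ _; exists (fun _ => 0) => [a b _ _ | S SS y _]; rewrite ?addr0 ?subrr.
Qed.

Lemma exact_at_Mhat :
  sg_exact (A := Picgrp v Sigma) (B := Mhat v Sigma) (C := Ehat Sigma) descent (Phat' v).
Proof.
move=> x xM; split.
- move=> [e eF xe].
  have xdesc S : S \in Sigma_max Sigma -> descends e S (x S).
    by move=> SS; split => [|y Fy]; [exact: xM | rewrite -(xe S SS) //= subr0].
  have ePic : sg_in (Picgrp v Sigma) e.
    by apply: in_Picgrp => // S SS; exists (x S); exact: xdesc.
  exists e => //; exists (fun _ => 0) => [a b _ _ | S SS u Nu]; first by rewrite addr0.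
  by rewrite (descends_unique (descentP ePic SS) (xdesc S SS) _ Nu) // subrr.
- move=> [p pPic [m mN px]].
  exists (fun y => p y - m (Pmap v y)) => [a b _ _ | S SS y Fy].
    by rewrite /= (pPic.1 a b I I) (additive_on_full_Pmap v mN I I); ring.
  have [_ pP] := descentP pPic SS.
  by rewrite /Phat' /= subr0 -(px S SS _ (Nsig_Pmap v Fy)) -pP // subKr.
Qed.

Lemma exact_at_Ehat :
  sg_exact (A := Mhat v Sigma) (B := Ehat Sigma) (C := Khat v Sigma) (Phat' v) id.
Proof.
move=> y yE; split.
- move=> [e eF ye].
  have /fin_all_exists[x xP] : forall S, exists m, S \in Sigma_max Sigma ->
      descends (fun z => y S z - e z) S m.
    move=> S; have [SS | _] := boolP (S \in Sigma_max Sigma); last by exists (fun _ => 0).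
    by have [m mN ym] := ye S SS; exists m => _; split => // z Fz; rewrite -ym // subr0.
  exists x => [S SS | ]; first exact: (xP S SS).1.
  exists (fun z => - e z) => [a b _ _ | S SS z Fz]; first by rewrite /= (eF a b) // opprD.
  by rewrite /Phat' -(xP S SS).2 //; ring.
- move=> [x xM [e eF xy]].
  exists (fun z => - e z) => [a b _ _ | S SS]; first by rewrite /= (eF a b) // opprD.
  exists (x S) => [|z Fz]; first exact: xM.
  by rewrite /= subr0 -(xy S SS z Fz) /Phat'; ring.
Qed.

Lemma Khat_refl y : sg_eq (Khat v Sigma) y y.
Proof.
exists (fun _ => 0) => [a b _ _ | S SS]; first by rewrite addr0.
by exists (fun _ => 0) => [a b _ _ | z _]; rewrite ?addr0 //= subrr.
Qed.

Lemma Ehat_Khat_hom : sg_hom (A := Ehat Sigma) (B := Khat v Sigma) id.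
Proof.
split => // [y1 y2 _ _ [e eF y12] | y1 y2 _ _]; last exact: Khat_refl.
exists e => // S SS; exists (fun _ => 0) => [a b _ _ | z Fz]; first by rewrite addr0.
by rewrite y12 // subrr.
Qed.

Lemma Ehat_Khat_surjective : sg_surjective (A := Ehat Sigma) (B := Khat v Sigma) id.
Proof. by move=> y yE; exists y => //; apply: Khat_refl. Qed.
End Descent.

Theorem proposition2p3 (r n : nat) (v : 'I_n -> 'rV[int]_r)
    (Sigma : {set {set 'I_n}}) :
  is_fan v Sigma -> fan_nondegenerate v ->
  [/\ beta_surjective Sigma,
      exists (f : sg_car (Picgrp v Sigma) -> sg_car (Mhat v Sigma))
             (g : sg_car (Ehat Sigma) -> sg_car (Khat v Sigma)),
        @sg_exact4 (Picgrp v Sigma) (Mhat v Sigma) (Ehat Sigma) (Khat v Sigma)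
          f (@Phat' r n v) g &
      alpha_surjective v Sigma ->
        [/\ sg_torsion_free (Mhat v Sigma),
            sg_hom (A := Mhat v Sigma) (B := NhatDual v Sigma) (gammaStar Sigma),
            sg_injective (A := Mhat v Sigma) (B := NhatDual v Sigma) (gammaStar Sigma),
            sg_surjective (A := Mhat v Sigma) (B := NhatDual v Sigma) (gammaStar Sigma) &
           [/\ sg_hom (A := Ehat Sigma) (B := FhatDual Sigma) (deltaStar Sigma),
            sg_injective (A := Ehat Sigma) (B := FhatDual Sigma) (deltaStar Sigma),
            sg_surjective (A := Ehat Sigma) (B := FhatDual Sigma) (deltaStar Sigma) &
            forall x, sg_in (Mhat v Sigma) x ->
              sg_eq (FhatDual Sigma) (deltaStar Sigma (Phat' v x))
                    (PhatStar v (gammaStar Sigma x))]]].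
Proof.
move=> [_ _ _ _ [rays _ _]] _.
have beta_onto := beta_surjective_of_rays rays.
have N0 := @Nsig0 r n v; have ND := @NsigD r n v; have NN := @NsigN r n v.
have F0 := @Fsig0 n; have FD := @FsigD n; have FN := @FsigN n.
split => // [|alpha_onto].
- exists (descent v), id; split.
  + exact: descent_hom.
  + exact: Phat'_hom.
  + exact: Ehat_Khat_hom.
  + split; [exact: descent_injective | exact: exact_at_Mhat | exact: exact_at_Ehat |].
    exact: Ehat_Khat_surjective.
- split; first exact: hat_grp_torsion_free N0 ND NN alpha_onto.
  + exact: (dsum_pairing_hom _ (Nsig v)).
  + exact: dsum_pairing_injective N0 ND NN alpha_onto.
  + exact: dsum_pairing_surjective N0 ND NN alpha_onto.
  (* The last component, hat P' = hat P^*, holds by conversion. *)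
  split => //.
  + exact: (dsum_pairing_hom _ (@Fsig n)).
  + exact: dsum_pairing_injective F0 FD FN beta_onto.
  + exact: dsum_pairing_surjective F0 FD FN beta_onto.
Qed.
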